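(* Let $a<0$, $I=(a,+\infty)$, and let $V\in C^2(I)$ satisfy $\lim_{u\to a^+}V(u)=h^*>0$, $\lim_{u\to a^+}V'(u)=-\infty$, $V(0)=V'(0)=0$, $V''(0)>0$, $uV'(u)>0$ for all $u\in I\setminus\{0\}$, and $V(u)\to+\infty$ as $u\to+\infty$. Let $\beta>0$ be the point with $V(\beta)=h^*$. If $u/V'(u)\to+\infty$ as $u\to+\infty$ and $V''(u)>0$ for all $u>\beta$, then the extended period function satisfies $T(h)\to+\infty$ as $h\to+\infty$.
   Context: For $h\in(0,h^* )$ let $a<u^-(h)<0<u^+(h)$ be the two solutions of $V(u)=h$; for $h\ge h^*$ let $u^+(h)>0$ be the positive solution of $V(u)=h$. Define $T_p(h)=\sqrt2\int_{u^-(h)}^{u^+(h)}\frac{du}{\sqrt{h-V(u)}}$ for $0<h<h^*$ and $T_b(h)=\sqrt2\int_{a}^{u^+(h)}\frac{du}{\sqrt{h-V(u)}}$ for $h\ge h^*$. The extended period function (of the equation $\ddot u+V'(u)=0$) is $T(h)=T_p(h)$ for $0<h<h^*$ and $T(h)=T_b(h)$ for $h\ge h^*$. *)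

From Stdlib Require Import Reals.
From Coquelicot Require Import Coquelicot.
Open Scope R_scope.

Definition period_integrand (V : R -> R) (h : R) (u : R) : R :=
  sqrt 2 / sqrt (h - V u).

Definition T_p (V um up : R -> R) (h : R) : R :=
  RInt_gen (period_integrand V h) (at_right (um h)) (at_left (up h)).

Definition T_b (V up : R -> R) (a h : R) : R :=
  RInt_gen (period_integrand V h) (at_right a) (at_left (up h)).

Definition T_ext (V um up : R -> R) (a hstar h : R) : R :=
  if Rlt_dec h hstar then T_p V um up h else T_b V up a h.

From Stdlib Require Import Reals Lra Classical.
From Coquelicot Require Import Coquelicot.
Open Scope R_scope.

(* For h > h* we have T(h) = T_b(h), an integral over (a, b) with b = u^+(h).
   As RInt_gen is total, its convergence has to be proved first: V <= h* on
   (a, 0], so the integrand is bounded there, and near b the mean value theorem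
   gives h - V(u) >= V'(b) (b - u) / 2, an integrable singularity; the partial
   integrals are thus bounded and increasing, and converge to their supremum.
   For the lower bound take U with u / V'(u) > 8 K^2 beyond U.  For large h,
   b >= 2 U, and on [U, (U + b) / 2] the mean value theorem gives
   h - V(u) = V'(xi) (b - u) <= b^2 / (8 K^2), so the integrand is at least
   4 K / b on an interval of length at least b / 4. *)

Lemma RInt_le_inv_sqrt (f : R -> R) (q b K y : R) :
  q <= y < b -> 0 <= K -> ex_RInt f q y ->
  (forall u, q <= u <= y -> f u <= K / sqrt (b - u)) ->
  RInt f q y <= 2 * K * sqrt (b - q).
Proof.
  intros Hy HK Hf Hfle.
  assert (Hprim : forall u, u < b ->
    is_derive (fun u => - (2 * K) * sqrt (b - u)) u (K / sqrt (b - u))).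
  { intros u Hu. auto_derive; [lra|].
    replace (b + - u) with (b - u) by ring.
    assert (0 < sqrt (b - u)) by (apply sqrt_lt_R0; lra).
    field. lra. }
  assert (Hint : is_RInt (fun u => K / sqrt (b - u)) q y
                   (- (2 * K) * sqrt (b - y) - - (2 * K) * sqrt (b - q))).
  { apply (is_RInt_derive (fun u => - (2 * K) * sqrt (b - u)));
      intros u Hu; rewrite Rmin_left, Rmax_right in Hu by lra.
    - apply Hprim; lra.
    - apply (ex_derive_continuous (fun u => K / sqrt (b - u))).
      auto_derive. replace (b + - u) with (b - u) by ring.
      assert (0 < sqrt (b - u)) by (apply sqrt_lt_R0; lra). lra. }
  apply Rle_trans with (RInt (fun u => K / sqrt (b - u)) q y).
  - apply RInt_le; [lra | exact Hf | eexists; exact Hint | ].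
    intros u Hu; apply Hfle; lra.
  - rewrite (is_RInt_unique _ _ _ _ Hint).
    assert (0 <= sqrt (b - y)) by apply sqrt_pos. nra.
Qed.

Section NonnegImproperIntegral.

Variables (f : R -> R) (a b : R).
Hypothesis f_int : forall x y, a < x -> x <= y -> y < b -> ex_RInt f x y.
Hypothesis f_ge0 : forall u, a < u < b -> 0 <= f u.

Lemma RInt_ge0_in x y : a < x -> x <= y -> y < b -> 0 <= RInt f x y.
Proof.
  intros Hx Hxy Hy. apply RInt_ge_0; [lra | apply f_int; lra |].
  intros u Hu; apply f_ge0; lra.
Qed.

Lemma RInt_le_superinterval x y x' y' :
  a < x' -> x' <= x -> x <= y -> y <= y' -> y' < b -> RInt f x y <= RInt f x' y'.
Proof.
  intros Hx' Hx Hxy Hy Hy'.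
  rewrite <- (RInt_Chasles f x' x y'), <- (RInt_Chasles f x y y')
    by (apply f_int; lra).
  assert (0 <= RInt f x' x) by (apply RInt_ge0_in; lra).
  assert (0 <= RInt f y y') by (apply RInt_ge0_in; lra).
  unfold plus; simpl; lra.
Qed.

Lemma is_RInt_gen_of_bounded (B : R) :
  a < b ->
  (forall x y, a < x -> x <= y -> y < b -> RInt f x y <= B) ->
  exists T, is_RInt_gen f (at_right a) (at_left b) T /\
    forall x y, a < x -> x <= y -> y < b -> RInt f x y <= T.
Proof.
  intros Hab HB.
  set (E := fun z => exists x y, a < x /\ x <= y /\ y < b /\ z = RInt f x y).
  destruct (completeness E) as [T [HT_ub HT_lub]].
  - exists B. intros z (x & y & Hx & Hxy & Hy & ->). now apply HB.
  - exists (RInt f ((a + a + b) / 3) ((a + a + b) / 3)).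
    exists ((a + a + b) / 3), ((a + a + b) / 3). repeat split; lra.
  - assert (HT : forall x y, a < x -> x <= y -> y < b -> RInt f x y <= T).
    { intros x y Hx Hxy Hy. apply HT_ub. exists x, y. repeat split; auto. }
    exists T; split; [| exact HT].
    intros P [eps HP].
    assert (Happrox : exists x0 y0, a < x0 /\ x0 <= y0 /\ y0 < b /\
                                    T - eps < RInt f x0 y0).
    { apply NNPP; intros Hno.
      assert (T <= T - eps); [| destruct eps; simpl in *; lra].
      apply HT_lub. intros z (x & y & Hx & Hxy & Hy & ->).
      apply Rnot_lt_le; intros Hlt. apply Hno. exists x, y. repeat split; auto. }
    destruct Happrox as (x0 & y0 & Hx0 & Hxy0 & Hy0 & Hlt).
    apply Filter_prod with (fun x => a < x <= x0) (fun y => y0 <= y < b).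
    + apply (locally_interval _ a m_infty x0); try easy.
      intros x _ Hx Hax. simpl in Hx. lra.
    + apply (locally_interval _ b y0 p_infty); try easy.
      intros y Hy _ Hyb. simpl in Hy. lra.
    + intros x y [Hx Hx'] [Hy Hy']. exists (RInt f x y). split.
      * apply (RInt_correct (V := R_CompleteNormedModule)), f_int; lra.
      * apply HP. apply Rabs_lt_between.
        assert (RInt f x0 y0 <= RInt f x y) by (apply RInt_le_superinterval; lra).
        assert (RInt f x y <= T) by (apply HT; lra).
        destruct eps; simpl in *. unfold minus, plus, opp; simpl. lra.
Qed.

Lemma RInt_le_RInt_gen_of_endpoint_bounds (p q M K : R) :
  a < p -> p < q -> q < b ->
  (forall u, a < u <= p -> f u <= M) ->
  (forall u, q <= u < b -> f u <= K / sqrt (b - u)) ->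
  forall x y, a < x -> x <= y -> y < b ->
    RInt f x y <= RInt_gen f (at_right a) (at_left b).
Proof.
  intros Hap Hpq Hqb HM HK.
  assert (HM0 : 0 <= M) by (apply Rle_trans with (f p); [apply f_ge0 | apply HM]; lra).
  assert (HK0 : 0 <= K).
  { assert (Hsq : 0 < sqrt (b - q)) by (apply sqrt_lt_R0; lra).
    assert (0 <= K / sqrt (b - q)) by (apply Rle_trans with (f q); [apply f_ge0 | apply HK]; lra).
    apply Rmult_le_reg_r with (/ sqrt (b - q)); [now apply Rinv_0_lt_compat | lra]. }
  assert (Hbound : forall x y, a < x -> x <= y -> y < b ->
            RInt f x y <= M * (p - a) + RInt f p q + 2 * K * sqrt (b - q)).
  { intros x y Hx Hxy Hy.
    pose proof (Rmin_l x p). pose proof (Rmin_r x p).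
    pose proof (Rmax_l y q). pose proof (Rmax_r y q).
    assert (a < Rmin x p) by (apply Rmin_glb_lt; lra).
    assert (Rmax y q < b) by (apply Rmax_lub_lt; lra).
    set (x' := Rmin x p) in *. set (y' := Rmax y q) in *.
    apply Rle_trans with (RInt f x' y'); [apply RInt_le_superinterval; lra |].
    rewrite <- (RInt_Chasles f x' p y'), <- (RInt_Chasles f p q y')
      by (apply f_int; lra).
    assert (RInt f x' p <= M * (p - a)).
    { apply Rle_trans with (RInt (fun _ => M) x' p).
      - apply RInt_le; [lra | apply f_int; lra | apply ex_RInt_const |].
        intros u Hu; apply HM; lra.
      - rewrite RInt_const. unfold scal; simpl; unfold mult; simpl. nra. }
    assert (RInt f q y' <= 2 * K * sqrt (b - q)).
    { apply RInt_le_inv_sqrt; [lra | lra | apply f_int; lra |].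
      intros u Hu; apply HK; lra. }
    unfold plus; simpl; lra. }
  destruct (is_RInt_gen_of_bounded _ ltac:(lra) Hbound) as [T [HT Hle]].
  rewrite (is_RInt_gen_unique _ _ HT). exact Hle.
Qed.

End NonnegImproperIntegral.

Lemma period_integrand_ge0 V h u : 0 <= period_integrand V h u.
Proof.
  unfold period_integrand, Rdiv. apply Rmult_le_pos; [apply sqrt_pos |].
  destruct (Req_dec (sqrt (h - V u)) 0) as [-> | Hne].
  - rewrite Rinv_0; lra.
  - pose proof (sqrt_pos (h - V u)).
    apply Rlt_le, Rinv_0_lt_compat; lra.
Qed.

Lemma period_integrand_le V h u m :
  0 < m -> m <= h - V u -> period_integrand V h u <= sqrt 2 / sqrt m.
Proof.
  intros Hm Hmd. unfold period_integrand, Rdiv.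
  apply Rmult_le_compat_l; [apply sqrt_pos |].
  apply Rinv_le_contravar; [apply sqrt_lt_R0; lra | apply sqrt_le_1_alt; lra].
Qed.

Lemma period_integrand_le_inv_sqrt V h u b c :
  0 < c -> u < b -> c * (b - u) <= h - V u ->
  period_integrand V h u <= (sqrt 2 / sqrt c) / sqrt (b - u).
Proof.
  intros Hc Hu Hgap.
  assert (0 < sqrt c) by (apply sqrt_lt_R0; lra).
  assert (0 < sqrt (b - u)) by (apply sqrt_lt_R0; lra).
  replace ((sqrt 2 / sqrt c) / sqrt (b - u)) with (sqrt 2 / sqrt (c * (b - u)))
    by (rewrite sqrt_mult by lra; field; lra).
  apply period_integrand_le; [nra | exact Hgap].
Qed.

Lemma period_integrand_ge V h u L :
  0 < h - V u -> 0 < L -> L * L * (h - V u) <= 2 -> L <= period_integrand V h u.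
Proof.
  intros Hd HL Hsq. unfold period_integrand.
  assert (Hs : 0 < sqrt (h - V u)) by (apply sqrt_lt_R0; lra).
  assert (L * sqrt (h - V u) <= sqrt 2).
  { rewrite <- (sqrt_square L), <- sqrt_mult by nra.
    apply sqrt_le_1_alt; lra. }
  apply Rmult_le_reg_r with (sqrt (h - V u)); [exact Hs |].
  unfold Rdiv; rewrite Rmult_assoc, Rinv_l by lra; lra.
Qed.

Lemma period_integrand_continuous V h u :
  ex_derive V u -> V u < h -> continuous (period_integrand V h) u.
Proof.
  intros HV Hlt. unfold period_integrand, Rdiv.
  apply (continuous_mult (fun _ => sqrt 2) (fun u => / sqrt (h - V u)));
    [apply continuous_const |].
  apply continuous_Rinv_comp.
  - apply continuous_sqrt_comp, (continuous_minus (fun _ => h) V);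
      [apply continuous_const | now apply ex_derive_continuous].
  - assert (0 < sqrt (h - V u)) by (apply sqrt_lt_R0; lra). lra.
Qed.

Section Potential.

Variables (V : R -> R) (a hstar : R).
Hypothesis a_neg : a < 0.
Hypothesis V_derivable : forall u, a < u -> ex_derive V u.
Hypothesis V_sign : forall u, a < u -> u <> 0 -> 0 < u * Derive V u.

Lemma V_MVT x y : a < x -> x < y ->
  exists xi, x < xi < y /\ V y - V x = Derive V xi * (y - x).
Proof.
  intros Hx Hxy.
  destruct (MVT_cor2 V (Derive V) x y Hxy) as [xi [E Hxi]].
  - intros c Hc. apply is_derive_Reals, Derive_correct, V_derivable; lra.
  - now exists xi.
Qed.

Lemma Derive_V_gt0 u : 0 < u -> 0 < Derive V u.
Proof. intros Hu. pose proof (V_sign u ltac:(lra) ltac:(lra)). nra. Qed.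

Lemma V_increasing x y : 0 <= x -> x < y -> V x < V y.
Proof.
  intros Hx Hxy. destruct (V_MVT x y) as [xi [Hxi E]]; [lra | lra |].
  pose proof (Derive_V_gt0 xi ltac:(lra)). nra.
Qed.

Lemma V_decreasing x y : a < x -> x < y -> y <= 0 -> V y < V x.
Proof.
  intros Hx Hxy Hy. destruct (V_MVT x y) as [xi [Hxi E]]; [lra | lra |].
  pose proof (V_sign xi ltac:(lra) ltac:(lra)). nra.
Qed.

Hypothesis V_lim_a : filterlim V (at_right a) (locally hstar).

Lemma V_le_hstar u : a < u <= 0 -> V u <= hstar.
Proof.
  intros Hu.
  enough (H : Rbar_le (V u) hstar) by exact H.
  apply (filterlim_le (F := at_right a) (fun _ => V u) V);
    [| apply filterlim_const | exact V_lim_a].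
  apply (locally_interval _ a m_infty u); try easy.
  intros w _ Hw Haw. simpl in Hw. apply Rlt_le, V_decreasing; lra.
Qed.

Lemma V_lt_level b u : hstar < V b -> 0 < b -> a < u < b -> V u < V b.
Proof.
  intros Hb Hb0 Hu. destruct (Rle_dec u 0).
  - pose proof (V_le_hstar u ltac:(lra)). lra.
  - apply V_increasing; lra.
Qed.

Hypothesis DV_continuous : forall u, a < u -> continuous (Derive V) u.

Lemma V_gap_near_level b : 0 < b ->
  exists q, 0 < q < b /\
    forall u, q <= u < b -> Derive V b / 2 * (b - u) <= V b - V u.
Proof.
  intros Hb.
  assert (HDb : 0 < Derive V b) by (now apply Derive_V_gt0).
  destruct (proj1 (filterlim_locally (F := locally b) _ _) (DV_continuous b ltac:(lra))
              (mkposreal (Derive V b / 2) ltac:(lra))) as [eta Heta].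
  pose proof (cond_pos eta).
  exists (Rmax (b - eta / 2) (b / 2)).
  pose proof (Rmax_l (b - eta / 2) (b / 2)). pose proof (Rmax_r (b - eta / 2) (b / 2)).
  split; [split; [lra | apply Rmax_lub_lt; lra] |].
  intros u Hu.
  destruct (V_MVT u b) as [xi [Hxi E]]; [lra | lra |].
  assert (Hball : ball b eta xi) by (apply Rabs_lt_between; unfold minus, plus, opp; simpl; lra).
  specialize (Heta xi Hball). apply Rabs_lt_between in Heta.
  unfold minus, plus, opp in Heta; simpl in Heta. nra.
Qed.

Lemma V_gap_le M U b u : 0 < U ->
  (forall xi, U < xi -> M < xi / Derive V xi) ->
  U <= u < b -> (V b - V u) * M <= b * (b - u).
Proof.
  intros HU Hquot Hu.
  destruct (V_MVT u b) as [xi [Hxi E]]; [lra | lra |].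
  assert (HDxi : 0 < Derive V xi) by (apply Derive_V_gt0; lra).
  assert (HM : M * Derive V xi < xi).
  { specialize (Hquot xi ltac:(lra)).
    apply Rmult_lt_compat_r with (r := Derive V xi) in Hquot; [| exact HDxi].
    unfold Rdiv in Hquot. rewrite Rmult_assoc, Rinv_l in Hquot by lra. lra. }
  rewrite E. nra.
Qed.

Lemma period_integrand_ex_RInt h b x y :
  hstar < h -> 0 < b -> V b = h -> a < x -> x <= y -> y < b ->
  ex_RInt (period_integrand V h) x y.
Proof.
  intros Hh Hb HVb Hx Hxy Hy.
  apply (ex_RInt_continuous (V := R_CompleteNormedModule)).
  intros z Hz. rewrite Rmin_left, Rmax_right in Hz by lra.
  apply period_integrand_continuous; [apply V_derivable; lra |].
  subst h. apply V_lt_level; lra.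
Qed.

Lemma RInt_le_T_b h b x y :
  hstar < h -> 0 < b -> V b = h -> a < x -> x <= y -> y < b ->
  RInt (period_integrand V h) x y <=
    RInt_gen (period_integrand V h) (at_right a) (at_left b).
Proof.
  intros Hh Hb HVb.
  destruct (V_gap_near_level b Hb) as [q [Hq Hgap]].
  pose proof (Derive_V_gt0 b Hb).
  assert (f_int : forall x' y', a < x' -> x' <= y' -> y' < b ->
                   ex_RInt (period_integrand V h) x' y')
    by (intros x' y'; apply (period_integrand_ex_RInt h b); lra).
  apply (RInt_le_RInt_gen_of_endpoint_bounds _ a b f_int
           (fun u _ => period_integrand_ge0 V h u) 0 q
           (sqrt 2 / sqrt (h - hstar)) (sqrt 2 / sqrt (Derive V b / 2)));
    try lra.
  - intros u Hu. apply period_integrand_le; [lra |].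
    pose proof (V_le_hstar u Hu). lra.
  - intros u Hu. apply period_integrand_le_inv_sqrt; [lra | lra |].
    subst h. apply Hgap; lra.
Qed.

Lemma RInt_period_integrand_ge K U h b :
  0 < K -> 0 < U -> (forall xi, U < xi -> 8 * K * K < xi / Derive V xi) ->
  2 * U <= b -> hstar < h -> V b = h ->
  K <= RInt (period_integrand V h) U ((U + b) / 2).
Proof.
  intros HK HU Hquot HUb Hh HVb.
  apply Rle_trans with (RInt (fun _ => 4 * K / b) U ((U + b) / 2)).
  - rewrite RInt_const. unfold scal; simpl; unfold mult; simpl.
    apply Rmult_le_reg_r with b; [lra |].
    field_simplify; [nra | lra].
  - apply RInt_le; [lra | apply ex_RInt_const | apply (period_integrand_ex_RInt h b); lra |].
    intros u Hu.
    assert (Hpos : 0 < h - V u) by (subst h; enough (V u < V b) by lra; apply V_lt_level; lra).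
    assert (Hgap : (h - V u) * (8 * K * K) <= b * (b - u))
      by (subst h; apply (V_gap_le _ U); [lra | exact Hquot | lra]).
    apply period_integrand_ge; [lra | apply Rdiv_lt_0_compat; lra |].
    replace (4 * K / b * (4 * K / b) * (h - V u))
      with (2 * ((h - V u) * (8 * K * K)) / (b * b)) by (field; lra).
    apply Rmult_le_reg_r with (b * b); [nra |].
    unfold Rdiv; rewrite Rmult_assoc, Rinv_l by nra. nra.
Qed.

End Potential.

Theorem lemma2p2
  (V : R -> R) (a hstar beta : R) (um up : R -> R)
  (Ha : a < 0)
  (* V is C^2 on I = (a, +oo) *)
  (HC2 : forall u, a < u ->
     ex_derive V u /\ ex_derive (Derive V) u /\
     continuous (Derive (Derive V)) u)
  (Hlim_a : filterlim V (at_right a) (locally hstar))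
  (Hhstar : 0 < hstar)
  (Hdlim_a : filterlim (Derive V) (at_right a) (Rbar_locally m_infty))
  (HV0 : V 0 = 0) (HdV0 : Derive V 0 = 0) (Hd2V0 : 0 < Derive (Derive V) 0)
  (Hsign : forall u, a < u -> u <> 0 -> 0 < u * Derive V u)
  (Hinf : filterlim V (Rbar_locally p_infty) (Rbar_locally p_infty))
  (* beta > 0 is the point with V(beta) = h* *)
  (Hbeta : 0 < beta) (HVbeta : V beta = hstar)
  (* u^-(h), u^+(h): the solutions of V(u) = h *)
  (Hum : forall h, 0 < h < hstar -> a < um h < 0 /\ V (um h) = h)
  (Hup : forall h, 0 < h -> 0 < up h /\ V (up h) = h)
  (* extra hypotheses *)
  (Hquot : filterlim (fun u => u / Derive V u)
             (Rbar_locally p_infty) (Rbar_locally p_infty))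
  (Hconv : forall u, beta < u -> 0 < Derive (Derive V) u) :
  filterlim (T_ext V um up a hstar) (Rbar_locally p_infty) (Rbar_locally p_infty).
Proof.
  assert (V_derivable : forall u, a < u -> ex_derive V u)
    by (intros u Hu; apply HC2, Hu).
  assert (DV_continuous : forall u, a < u -> continuous (Derive V) u)
    by (intros u Hu; apply (ex_derive_continuous (Derive V)), HC2, Hu).
  change (is_lim (T_ext V um up a hstar) p_infty p_infty).
  apply is_lim_spec. intros M.
  set (K := Rmax M 0 + 1).
  assert (HK : 0 < K /\ M < K)
    by (unfold K; pose proof (Rmax_l M 0); pose proof (Rmax_r M 0); lra).
  destruct (Hquot (fun y => 8 * K * K < y)) as [U HU]; [now exists (8 * K * K) |].
  set (U' := Rmax U 1).
  assert (HU' : U <= U' /\ 1 <= U') by (split; [apply Rmax_l | apply Rmax_r]).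
  exists (Rmax hstar (V (2 * U'))). intros h Hh.
  pose proof (Rmax_l hstar (V (2 * U'))). pose proof (Rmax_r hstar (V (2 * U'))).
  unfold T_ext. destruct (Rlt_dec h hstar) as [Hlt | _]; [lra |]. unfold T_b.
  destruct (Hup h ltac:(lra)) as [Hb HVb].
  assert (H2U : 2 * U' <= up h).
  { apply Rnot_lt_le. intros Hlt.
    pose proof (V_increasing V a Ha V_derivable Hsign (up h) (2 * U') ltac:(lra) Hlt).
    lra. }
  apply Rlt_le_trans with K; [lra |].
  apply Rle_trans with (RInt (period_integrand V h) U' ((U' + up h) / 2)).
  - apply (RInt_period_integrand_ge V a hstar); try lra; auto.
    intros xi Hxi. apply HU. lra.
  - apply (RInt_le_T_b V a hstar); auto; lra.
Qed.
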